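(* Let $D$ be an integral domain. Then $D[X]_A$ satisfies the ascending chain condition on associated prime ideals if and only if $D$ satisfies the ascending chain condition on associated prime ideals.
   Context: $X$ is an indeterminate over $D$, $A=\{f\in D[X]\mid f(0)=1\}$, and $D[X]_A$ is the localization at $A$. For an integral domain $E$, a prime ideal $P$ of $E$ is an associated prime ideal of $E$ if there exist $a\in E$ and $b\in E\setminus aE$ such that $P$ is minimal over $(aE:bE)=\{x\in E\mid xb\in aE\}$. $E$ satisfies the ascending chain condition on associated prime ideals if every ascending chain of associated prime ideals of $E$ is stationary. *)

From HB Require Import structures.
From mathcomp Require Import all_boot all_order all_algebra fraction.
Set Implicit Arguments. Unset Strict Implicit. Unset Printing Implicit Defensive.
Import GRing.Theory.
Local Open Scope ring_scope.

(* An integral domain E is represented as a subring S of an integral domain R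
   (given by a predicate S : R -> Prop).  Ideals of E are predicates on R
   contained in S. *)
Section AssocPrimes.
Variables (R : idomainType) (S : R -> Prop).

Definition is_ideal (I : R -> Prop) : Prop :=
  [/\ forall x, I x -> S x,
      I 0,
      forall x y, I x -> I y -> I (x + y) &
      forall r x, S r -> I x -> I (r * x)].

Definition is_prime_ideal (P : R -> Prop) : Prop :=
  [/\ is_ideal P, ~ P 1 &
      forall x y, S x -> S y -> P (x * y) -> P x \/ P y].

(* (aE : bE) = { x in E | x b in aE } *)
Definition colon (a b : R) : R -> Prop :=
  fun x => S x /\ exists2 y, S y & x * b = a * y.

Definition minimal_prime_over (I P : R -> Prop) : Prop :=
  [/\ is_prime_ideal P, (forall x, I x -> P x) &
      forall Q, is_prime_ideal Q -> (forall x, I x -> Q x) ->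
        (forall x, Q x -> P x) -> forall x, P x -> Q x].

Definition is_assoc_prime (P : R -> Prop) : Prop :=
  exists a b, [/\ S a, S b, ~ (exists2 y, S y & b = a * y) &
                  minimal_prime_over (colon a b) P].

Definition acc_assoc_primes : Prop :=
  forall P : nat -> R -> Prop,
    (forall n, is_assoc_prime (P n)) ->
    (forall n x, P n x -> P n.+1 x) ->
    exists N, forall n, (N <= n)%N -> forall x, P n x <-> P N x.

End AssocPrimes.

(* D[X]_A, A = {f in D[X] | f(0) = 1}, realized inside the fraction field of D[X]. *)
Definition locA (D : idomainType) : {fraction {poly D}} -> Prop :=
  fun z => exists f g : {poly D}, g.[0] = 1 /\ z = tofrac f / tofrac g.
Arguments locA D : clear implicits.

From mathcomp Require Import all_boot all_order all_algebra fraction.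
From mathcomp Require Import zify ring boolp classical_sets.
Set Implicit Arguments. Unset Strict Implicit. Unset Printing Implicit Defensive.
Import GRing.Theory.
Local Open Scope ring_scope.

(* Compare associated primes through extension p |-> p D[X]_A and contraction
   Q |-> Q \cap D.  If p is minimal over (a : b) in D, then p D[X]_A is minimal
   over (a : b) in D[X]_A (Gauss's lemma makes p[X] prime) and contracts to p, so
   chains in D lift.  Conversely, let Q be minimal over (A : B) in D[X]_A.  If Q
   meets D in some c != 0, then t c^n B = A h/s with t outside Q, and a McCoy-type
   cancellation shows that Q = (Q \cap D) D[X]_A with Q \cap D minimal over
   (c^n : h_i) for a suitable coefficient h_i of h.  If Q \cap D = 0, then Q is 0
   or minimal among nonzero primes, because pseudo-division by a numerator of least
   degree shows that no nonzero prime lies strictly below it.  Hence a chain in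
   D[X]_A stabilizes as soon as its contractions do. *)

Lemma classic_ex_minn (P : nat -> Prop) :
  (exists n, P n) -> exists n, P n /\ forall m, P m -> (n <= m)%N.
Proof.
move=> exP; have /ex_minnP[n /asboolP Pn nmin] : exists n, `[< P n >].
  by case: exP => n /asboolP; exists n.
by exists n; split=> // m /asboolP /nmin.
Qed.

Lemma chain_le (T : Type) (P : nat -> T -> Prop) :
  (forall n x, P n x -> P n.+1 x) -> forall m n, (m <= n)%N -> forall x, P m x -> P n x.
Proof.
move=> Pinc m; elim=> [|n IHn]; first by rewrite leqn0 => /eqP <-.
by rewrite leq_eqVlt ltnS => /predU1P [<- //|mn] x /(IHn mn); apply: Pinc.
Qed.

Section SubringIdeals.
Variables (R : idomainType) (S : R -> Prop).
Hypotheses (S0 : S 0) (S1 : S 1).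
Hypothesis SD : forall x y, S x -> S y -> S (x + y).
Hypothesis SM : forall x y, S x -> S y -> S (x * y).

Lemma colon_ideal a b : is_ideal S (colon S a b).
Proof.
split.
- by move=> x [].
- by split=> //; exists 0; rewrite ?mul0r ?mulr0.
- move=> x y [Sx [u Su xb]] [Sy [v Sv yb]]; split; first exact: SD.
  by exists (u + v); [exact: SD | rewrite mulrDl xb yb mulrDr].
- move=> r x Sr [Sx [u Su xb]]; split; first exact: SM.
  by exists (r * u); [exact: SM | rewrite -mulrA xb mulrCA].
Qed.

Definition avoiding_ideal (I T M : R -> Prop) :=
  [/\ is_ideal S M, forall z, I z -> M z & forall z, M z -> ~ T z].

(* Chains may be empty, so Zorn is applied to the avoiding ideals together
   with the empty predicate. *)
Lemma max_avoiding_ideal (I T : R -> Prop) : avoiding_ideal I T I ->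
  exists2 M, avoiding_ideal I T M &
    forall N, avoiding_ideal I T N -> (forall z, M z -> N z) -> forall z, N z -> M z.
Proof.
move=> hI.
pose P (X : R -> Prop) := (forall z, ~ X z) \/ avoiding_ideal I T X.
have ZP : forall F : set (set R), (F `<=` P)%classic -> total_on F subset ->
    P (\bigcup_(X in F) X)%classic.
  move=> F FP Ftot.
  have avF X z : F X -> X z -> avoiding_ideal I T X.
    by move=> FX Xz; case: (FP X FX) => // /(_ z).
  have [[X0 [z0 [FX0 Xz0]]]|] := pselect (exists X z, F X /\ X z); last first.
    by move=> noX; left=> z [X FX Xz]; apply: noX; exists X, z.
  have [[_ I0 _ _] IX0 _] := avF _ _ FX0 Xz0.
  right; split; first split.
  - by move=> z [X FX Xz]; have [[XS _ _ _] _ _] := avF _ _ FX Xz; apply: XS.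
  - by exists X0 => //; apply: IX0.
  - move=> u v [X FX Xu] [Y FY Yv].
    have [XY|YX] := Ftot X Y FX FY.
      have [[_ _ YD _] _ _] := avF _ _ FY Yv.
      by exists Y => //; apply: YD => //; apply: XY.
    have [[_ _ XD _] _ _] := avF _ _ FX Xu.
    by exists X => //; apply: XD => //; apply: YX.
  - move=> r u Sr [X FX Xu]; have [[_ _ _ XM] _ _] := avF _ _ FX Xu.
    by exists X => //; apply: XM.
  - by move=> z Iz; exists X0 => //; apply: IX0.
  - by move=> z [X FX Xz]; have [_ _] := avF _ _ FX Xz; apply.
have [M [PM Mmax]] := Zorn_bigcup ZP.
have hM : avoiding_ideal I T M.
  case: PM => // M0; exfalso; apply: (Mmax I); last by right.
  split=> [z /M0 //|]; have [[_ I0 _ _] _ _] := hI.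
  by move=> IM; apply: (M0 0); apply: IM.
exists M => // N hN MN z Nz; apply: contrapT => Mz.
by apply: (Mmax N); [split=> // NM; apply: Mz; apply: NM | right].
Qed.

Definition ideal_addr (M : R -> Prop) w : R -> Prop :=
  fun z => exists m e, [/\ M m, S e & z = m + e * w].

Lemma ideal_addr_ideal M w : is_ideal S M -> S w -> is_ideal S (ideal_addr M w).
Proof.
move=> [MS M0 MD MM] Sw; split.
- by move=> z [m [e [Mm Se ->]]]; apply: SD; [apply: MS | apply: SM].
- by exists 0, 0; rewrite mul0r addr0.
- move=> z1 z2 [m1 [e1 [M1 Se1 ->]]] [m2 [e2 [M2 Se2 ->]]].
  exists (m1 + m2), (e1 + e2); split; [exact: MD | exact: SD |].
  by rewrite mulrDl addrACA.
- move=> r z Sr [m [e [Mm Se ->]]]; exists (r * m), (r * e).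
  by split; [exact: MM | exact: SM | rewrite mulrDr mulrA].
Qed.

Lemma prime_of_max_avoiding (I T M : R -> Prop) :
  avoiding_ideal I T M ->
  (forall N, avoiding_ideal I T N -> (forall z, M z -> N z) -> forall z, N z -> M z) ->
  T 1 -> (forall u v, T u -> T v -> T (u * v)) -> is_prime_ideal S M.
Proof.
move=> [hM IM MT] Mmax T1 TM; have [MS M0 MD MM] := hM.
have meet w : S w -> ~ M w -> exists m e, [/\ M m, S e & T (m + e * w)].
  move=> Sw Mw; apply: contrapT => noT.
  suff : forall z, ideal_addr M w z -> M z.
    by move/(_ w) => Mw'; apply: Mw; apply: Mw'; exists 0, 1; rewrite add0r mul1r.
  apply: Mmax; first split.
  - exact: ideal_addr_ideal.
  - by move=> z Iz; exists z, 0; rewrite mul0r addr0; split=> //; apply: IM.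
  - by move=> z [m [e [Mm Se ->]]] Tz; apply: noT; exists m, e.
  by move=> z Mz; exists z, 0; rewrite mul0r addr0.
split=> // [M1|u v Su Sv Muv]; first exact: MT M1 T1.
apply: contrapT => /not_orP [Mu Mv].
have [m1 [e1 [M1 Se1 T1']]] := meet u Su Mu.
have [m2 [e2 [M2 Se2 T2']]] := meet v Sv Mv.
apply: MT (TM _ _ T1' T2').
rewrite mulrDl [X in _ + X]mulrDr addrA mulrACA.
apply: (MD); first apply: (MD).
- by rewrite mulrC; apply: MM => //; apply: SD; [apply: MS | apply: SM].
- by apply: MM => //; apply: SM.
- by apply: MM => //; apply: SM.
Qed.

Lemma minimal_prime_over_power I Q x :
  is_ideal S I -> minimal_prime_over S I Q -> Q x ->
  exists t n, [/\ S t, ~ Q t & I (t * x ^+ n)].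
Proof.
move=> hI [hQ IQ Qmin] Qx; apply: contrapT => noI.
have [[QS _ _ _] Q1 QP] := hQ.
pose T z := exists t n, [/\ S t, ~ Q t & z = t * x ^+ n].
have avI : avoiding_ideal I T I.
  by split=> // z Iz [t [n [St Qt ez]]]; apply: noI; exists t, n; rewrite -ez.
have [M avM Mmax] := max_avoiding_ideal avI.
have T1 : T 1 by exists 1, 0%N; rewrite mul1r expr0.
have TM u v : T u -> T v -> T (u * v).
  move=> [t1 [n1 [St1 Qt1 ->]]] [t2 [n2 [St2 Qt2 ->]]].
  exists (t1 * t2), (n1 + n2)%N; rewrite exprD mulrACA; split=> //; first exact: SM.
  by case/QP.
have hMp := prime_of_max_avoiding avM Mmax T1 TM.
have [[MS _ _ _] IM MT] := avM.
have MQ z : M z -> Q z.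
  move=> Mz; apply: contrapT => Qz; apply: (MT z Mz).
  by exists z, 0%N; rewrite expr0 mulr1; split=> //; apply: MS.
apply: (MT x (Qmin M hMp IM MQ x Qx)).
by exists 1, 1%N; rewrite mul1r expr1.
Qed.

End SubringIdeals.

Section DomainIdeals.
Variable D : idomainType.
Local Notation ideal := (is_ideal (fun _ : D => True)).
Local Notation prime_ideal := (is_prime_ideal (fun _ : D => True)).

Lemma idealM I r x : ideal I -> I x -> I (r * x).
Proof. by case=> _ _ _ IM; apply: IM. Qed.

Lemma idealB I x y : ideal I -> I x -> I y -> I (x - y).
Proof.
move=> hI Ix Iy; case: (hI) => _ _ ID _; apply: ID => //.
by rewrite -mulN1r; apply: idealM.
Qed.

Lemma ideal_sum I n (F : 'I_n -> D) :
  ideal I -> (forall i, I (F i)) -> I (\sum_(i < n) F i).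
Proof. by case=> _ I0 ID _ IF; elim/big_ind: _ => //. Qed.

Lemma ideal_sum_term I n (F : 'I_n -> D) (i : 'I_n) : ideal I ->
  (forall k, k != i -> I (F k)) -> I (\sum_(k < n) F k) -> I (F i).
Proof.
move=> hI IF; rewrite (bigD1 i) //= => Isum.
have Irest : I (\sum_(k < n | k != i) F k).
  by case: hI => _ I0 ID _; elim/big_ind: _ => // k; apply: IF.
by have := idealB hI Isum Irest; rewrite addrK.
Qed.

Definition divides (a x : D) := exists y, x = a * y.

Lemma divides_ideal a : ideal (divides a).
Proof.
split=> //; first by exists 0; rewrite mulr0.
  by move=> x y [u ->] [v ->]; exists (u + v); rewrite mulrDr.
by move=> r x _ [u ->]; exists (r * u); rewrite mulrCA.
Qed.

Lemma divides0 a : divides a 0.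
Proof. by case: (divides_ideal a). Qed.

Lemma dividesM a r x : divides a x -> divides a (r * x).
Proof. exact: idealM (divides_ideal a). Qed.

Definition poly_in (p : D -> Prop) (f : {poly D}) := forall i, p f`_i.

Lemma poly_inC p c : ideal p -> poly_in p c%:P <-> p c.
Proof.
case=> _ p0 _ _; split=> [/(_ 0%N)|pc i]; rewrite coefC //.
by case: eqP.
Qed.

Lemma poly_inD p f g : ideal p -> poly_in p f -> poly_in p g -> poly_in p (f + g).
Proof. by case=> _ _ pD _ pf pg i; rewrite coefD; apply: pD. Qed.

Lemma poly_inMr p f g : ideal p -> poly_in p g -> poly_in p (f * g).
Proof. by move=> hp pg i; rewrite coefM; apply: ideal_sum => // j; apply: idealM. Qed.

Lemma poly_inMl p f g : ideal p -> poly_in p f -> poly_in p (f * g).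
Proof. by rewrite mulrC; apply: poly_inMr. Qed.

Lemma poly_in_coef0 p (g : {poly D}) : prime_ideal p -> g`_0 = 1 -> ~ poly_in p g.
Proof. by case=> _ p1 _ g0 /(_ 0%N); rewrite g0. Qed.

(* Gauss: the lowest coefficients of f and g outside p give a product outside p. *)
Lemma poly_in_prime p f g : prime_ideal p ->
  poly_in p (f * g) -> poly_in p f \/ poly_in p g.
Proof.
move=> hp fgp; have [ip _ p_mul] := hp.
have [pf|/existsNP nf] := pselect (poly_in p f); first by left.
have [pg|/existsNP ng] := pselect (poly_in p g); first by right.
have [i [fi imin]] := classic_ex_minn nf.
have [j [gj jmin]] := classic_ex_minn ng.
have lt_i : (i < (i + j).+1)%N by rewrite ltnS leq_addr.
have := fgp (i + j)%N; rewrite coefM.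
move/(ideal_sum_term (i := Ordinal lt_i) ip); rewrite /= addKn.
case/(_ _)/p_mul => // k; rewrite -val_eqE /= => ne_ki.
case: (ltngtP k i) ne_ki => // [lt_ki|lt_ik] _.
  by rewrite mulrC; apply: idealM => //; apply: contrapT => /imin; rewrite leqNgt lt_ki.
apply: idealM => //; apply: contrapT => /jmin; rewrite leqNgt.
by have := ltn_ord k; rewrite ltnS => le_k; lia.
Qed.

Lemma divides_coef_step a (f g : {poly D}) s i n :
  (forall k, divides a (f * g)`_k) -> (forall k, (n < k)%N -> divides a g`_k) ->
  (forall k, (i < k)%N -> forall l, divides a (s * f`_k * g`_l)) ->
  divides a (s * f`_i * g`_n).
Proof.
move=> dfg dg ds; have lt_i : (i < (i + n).+1)%N by rewrite ltnS leq_addr.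
have := dividesM s (dfg (i + n)%N); rewrite coefM mulr_sumr.
move/(ideal_sum_term (i := Ordinal lt_i) (divides_ideal a)); rewrite /= addKn mulrA.
apply=> k; rewrite -val_eqE /= mulrA => ne_ki.
case: (ltngtP k i) ne_ki => // [lt_ki|lt_ik] _; last exact: ds.
by apply: dividesM; apply: dg; have := ltn_ord k; rewrite ltnS => le_k; lia.
Qed.

(* McCoy's argument: induction on a bound n beyond which a divides every g_k,
   and inside it downwards on an index i beyond which a divides every s0 f_k g_l. *)
Lemma divides_coef_cancel p a (f g : {poly D}) j : prime_ideal p -> ~ p f`_j ->
  (forall k, divides a (f * g)`_k) -> exists2 s, ~ p s & forall k, divides a (s * g`_k).
Proof.
move=> [_ p1 p_mul] pfj; have {}p_mul x y : p (x * y) -> p x \/ p y by apply: p_mul.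
suff cancel n : forall g : {poly D}, (forall k, (n <= k)%N -> divides a g`_k) ->
    (forall k, divides a (f * g)`_k) -> exists2 s, ~ p s & forall k, divides a (s * g`_k).
  by apply: (cancel (size g)) => k le_k; rewrite nth_default //; apply: divides0.
elim: n => [|n IHn] {}g dg dfg; first by exists 1 => // k; rewrite mul1r; apply: dg.
suff reduce i s0 : ~ p s0 ->
    (forall k, (i <= k)%N -> forall l, divides a (s0 * f`_k * g`_l)) ->
    exists2 s, ~ p s & forall k, divides a (s * g`_k).
  apply: (reduce (size f) 1) => // k le_k l.
  by rewrite nth_default // mulr0 mul0r; apply: divides0.
elim: i s0 => [|i IHi] s0 ps0 ds0.
  by exists (s0 * f`_j) => [/p_mul []|k] //; apply: ds0.
pose g' := (s0 * f`_i) *: g.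
have [s1 ps1 ds1] : exists2 s1, ~ p s1 & forall k, divides a (s1 * g'`_k).
  apply: IHn => k; last by rewrite /g' -scalerAr coefZ; apply: dividesM.
  rewrite /g' coefZ leq_eqVlt => /predU1P [<-|lt_nk]; last by apply: dividesM; apply: dg.
  exact: divides_coef_step dfg dg ds0.
apply: (IHi (s1 * s0)) => [/p_mul []|k] //; rewrite leq_eqVlt => /predU1P [<-|lt_ik] l.
  by have := ds1 l; rewrite /g' coefZ !mulrA.
by rewrite -!mulrA; apply: dividesM; rewrite !mulrA; apply: ds0.
Qed.

Lemma divides_coef_mul_unit a (f g : {poly D}) : g`_0 = 1 ->
  (forall k, divides a (f * g)`_k) -> forall k, divides a f`_k.
Proof.
move=> g0 dfg; elim/ltn_ind => k IHk.
have := dfg k; rewrite coefM => /(ideal_sum_term (i := ord_max) (divides_ideal a)).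
rewrite /= subnn g0 mulr1; apply=> m; rewrite -val_eqE /= => ne_mk.
rewrite mulrC; apply: dividesM; apply: IHk.
by have := ltn_ord m; rewrite ltnS leq_eqVlt (negPf ne_mk).
Qed.

Lemma divides_polyC a (h : {poly D}) :
  (forall k, divides a h`_k) -> exists w, h = a%:P * w.
Proof.
elim/poly_ind: h => [|h c IHh] dh; first by exists 0; rewrite mulr0.
have [w ->] : exists w, h = a%:P * w.
  by apply: IHh => k; have := dh k.+1; rewrite coefD coefMX coefC /= addr0.
have [y ->] : divides a c by have := dh 0%N; rewrite coefD coefMX coefC /= add0r.
by exists (w * 'X + y%:P); rewrite mulrDr mulrA polyCM.
Qed.

(* Otherwise the product of witnesses c_i outside q with a | c_i h_i would
   contradict the hypothesis. *)
Lemma coef_colon_prime q a (h : {poly D}) : prime_ideal q ->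
  (forall c, (forall k, divides a (c * h`_k)) -> q c) ->
  exists i, forall c, divides a (c * h`_i) -> q c.
Proof.
move=> [_ q1 q_mul] hq; apply: contrapT => /forallNP nocol.
have /choice [c cP] : forall i, exists c, divides a (c * h`_i) /\ ~ q c.
  by move=> i; have /existsNP [c /not_implyP] := nocol i; exists c.
suff : q (\prod_(i < size h) c i).
  by elim/big_ind: _ => // [x y qx qy /q_mul []|i _ qc] //; case: (cP i).
apply: hq => k; have [lt_k|le_k] := ltnP k (size h); last first.
  by rewrite nth_default // mulr0; apply: divides0.
rewrite (bigD1 (Ordinal lt_k)) //= mulrAC mulrC; apply: dividesM.
by case: (cP (Ordinal lt_k)).
Qed.

End DomainIdeals.

Section Localization.
Variable D : idomainType.
Local Notation K := {fraction {poly D}}.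
Local Notation "x %:F" := (@tofrac {poly D} x).
Local Notation cst c := (c%:P)%:F.
Local Notation E := (locA D).
Local Notation prime_ideal := (is_prime_ideal (fun _ : D => True)).

Lemma tofrac_neq0 (g : {poly D}) : g.[0] = 1 -> g%:F != 0.
Proof.
move=> g0; rewrite tofrac_eq0; apply/eqP => g_eq0.
by move: g0; rewrite g_eq0 horner0 => /eqP; rewrite eq_sym oner_eq0.
Qed.

Lemma locA_tofrac f : E f%:F.
Proof. by exists f, 1; rewrite hornerC tofrac1 divr1. Qed.

Lemma locA0 : E 0. Proof. by rewrite -tofrac0; apply: locA_tofrac. Qed.
Lemma locA1 : E 1. Proof. by rewrite -tofrac1; apply: locA_tofrac. Qed.

Lemma locAV g : g.[0] = 1 -> E (g%:F)^-1.
Proof. by move=> g0; exists 1, g; rewrite tofrac1 mul1r. Qed.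

Lemma locAD x y : E x -> E y -> E (x + y).
Proof.
move=> [f1 [g1 [g10 ->]]] [f2 [g2 [g20 ->]]].
exists (f1 * g2 + f2 * g1), (g1 * g2); rewrite hornerM g10 g20 mulr1.
by rewrite addf_div ?tofrac_neq0 // tofracD !tofracM.
Qed.

Lemma locAM x y : E x -> E y -> E (x * y).
Proof.
move=> [f1 [g1 [g10 ->]]] [f2 [g2 [g20 ->]]].
by exists (f1 * f2), (g1 * g2); rewrite hornerM g10 g20 mulr1 mulf_div !tofracM.
Qed.

Lemma locAN x : E x -> E (- x).
Proof. by move=> [f [g [g0 ->]]]; exists (- f), g; rewrite tofracN mulNr. Qed.

Lemma frac_cross_eq f g f' g' : g.[0] = 1 -> g'.[0] = 1 ->
  f%:F / g%:F = f'%:F / g'%:F -> f * g' = f' * g.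
Proof.
move=> g0 g'0 eq_fg; apply/eqP; rewrite -tofrac_eq !tofracM.
by rewrite -eqr_div ?tofrac_neq0 // eq_fg.
Qed.

Lemma ideal_fracE Q f g : is_ideal E Q -> g.[0] = 1 ->
  Q (f%:F / g%:F) <-> Q f%:F.
Proof.
move=> [_ _ _ QM] g0; split=> Qf; last by rewrite mulrC; apply: QM => //; apply: locAV.
by have := QM _ _ (locA_tofrac g) Qf; rewrite mulrC divfK // tofrac_neq0.
Qed.

Definition extension (p : D -> Prop) : K -> Prop :=
  fun z => exists f g, [/\ g.[0] = 1, poly_in p f & z = f%:F / g%:F].

Definition contraction (Q : K -> Prop) : D -> Prop := fun c => Q (cst c).

Lemma extension_num p f g : prime_ideal p -> g.[0] = 1 ->
  extension p (f%:F / g%:F) -> poly_in p f.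
Proof.
move=> hp g0 [f' [g' [g'0 pf' /(frac_cross_eq g0 g'0) eq_fg]]].
have /(poly_in_prime hp) [//|] : poly_in p (f * g').
  by rewrite eq_fg; apply: poly_inMl => //; case: hp.
by move/poly_in_coef0; rewrite -horner_coef0 => /(_ hp g'0).
Qed.

Lemma extension_prime p : prime_ideal p -> is_prime_ideal E (extension p).
Proof.
move=> hp; have ip : is_ideal (fun _ : D => True) p by case: hp.
split; first split.
- by move=> z [f [g [g0 _ ->]]]; exists f, g.
- by exists 0, 1; rewrite hornerC tofrac0 mul0r; split=> // i; rewrite coef0; case: ip.
- move=> x y [f1 [g1 [g10 p1 ->]]] [f2 [g2 [g20 p2 ->]]].
  exists (f1 * g2 + f2 * g1), (g1 * g2); rewrite hornerM g10 g20 mulr1.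
  split=> //; first by apply: poly_inD => //; apply: poly_inMl.
  by rewrite addf_div ?tofrac_neq0 // tofracD !tofracM.
- move=> r x [f1 [g1 [g10 ->]]] [f2 [g2 [g20 p2 ->]]].
  exists (f1 * f2), (g1 * g2); rewrite hornerM g10 g20 mulr1.
  by split=> //; [apply: poly_inMr | rewrite mulf_div !tofracM].
- rewrite -tofrac1 -[1%:F]divr1 => /(extension_num hp (hornerC 1 0)).
  by apply: poly_in_coef0; rewrite // coefC.
- move=> x y [f1 [g1 [g10 ->]]] [f2 [g2 [g20 ->]]].
  rewrite mulf_div -!tofracM => /(extension_num hp).
  rewrite hornerM g10 g20 mulr1 => /(_ erefl) /(poly_in_prime hp) [pf|pf].
    by left; exists f1, g1.
  by right; exists f2, g2.
Qed.

Lemma extension_min p Q : is_ideal E Q -> (forall c, p c -> Q (cst c)) ->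
  forall z, extension p z -> Q z.
Proof.
move=> hQ Qp z [f [g [g0 pf ->]]]; apply/ideal_fracE => //.
have [_ Q0 QD QM] := hQ.
rewrite -[f]coefK poly_def rmorph_sum; elim/big_ind: _ => // i _.
by rewrite /= -mul_polyC tofracM mulrC; apply: QM; [apply: locA_tofrac | apply: Qp].
Qed.

Lemma extension_mono p p' : (forall c, p c -> p' c) ->
  forall z, extension p z -> extension p' z.
Proof. by move=> pp' z [f [g [g0 pf ->]]]; exists f, g; split=> // i; apply: pp'. Qed.

Lemma contraction_prime Q : is_prime_ideal E Q -> prime_ideal (contraction Q).
Proof.
case=> [[_ Q0 QD QM] Q1 Qmul]; rewrite /contraction; split; first split.
- by [].
- by rewrite tofrac0.
- by move=> x y; rewrite polyCD tofracD; apply: QD.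
- by move=> r x _; rewrite polyCM tofracM; apply: QM; apply: locA_tofrac.
- by rewrite tofrac1.
- by move=> x y _ _; rewrite polyCM tofracM; apply: Qmul; apply: locA_tofrac.
Qed.

Lemma contraction_extension p c : prime_ideal p -> contraction (extension p) c <-> p c.
Proof.
move=> hp; have ip : is_ideal (fun _ : D => True) p by case: hp.
rewrite /contraction -[_%:F]divr1 -tofrac1; split.
  by move/(extension_num hp (hornerC 1 0))/(poly_inC _ ip).
by move=> pc; exists c%:P, 1; rewrite hornerC; split=> //; apply/poly_inC.
Qed.

Lemma extension_assoc_prime p : is_assoc_prime (fun _ : D => True) p ->
  is_assoc_prime E (extension p).
Proof.
move=> [a [b [_ _ ndvd [hp colp pmin]]]].
have ip : is_ideal (fun _ : D => True) p by case: hp.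
exists (cst a), (cst b); split; [exact: locA_tofrac | exact: locA_tofrac | | split].
- move=> [_ [u [v [v0 ->]]] eq_ab]; apply: ndvd; exists u`_0 => //.
  move: eq_ab; rewrite mulrA -tofracM -[cst b]divr1 -tofrac1.
  move/(frac_cross_eq (hornerC 1 0) v0)/(congr1 (fun q : {poly D} => q`_0)).
  by rewrite /= mulr1 !coefCM -horner_coef0 v0 mulr1.
- exact: extension_prime.
- move=> x [[f [g [g0 ->]]] [_ [u [v [v0 ->]]] eq_fg]].
  move: eq_fg; rewrite mulrAC mulrA -!tofracM => /(frac_cross_eq g0 v0) eq_fg.
  have : poly_in p (f * v).
    move=> k; apply: colp; split=> //; exists (u * g)`_k => //.
    have := congr1 (fun q : {poly D} => q`_k) eq_fg.
    by rewrite /= mulrAC coefMC -[a%:P * u * g]mulrA coefCM.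
  case/(poly_in_prime hp) => [pf|]; first by exists f, g.
  by move/poly_in_coef0; rewrite -horner_coef0 => /(_ hp v0).
- move=> Q' hQ' colQ' Q'p; have [iQ' _ _] := hQ'.
  apply: extension_min => // c; apply: (pmin (contraction Q')).
  + exact: contraction_prime.
  + move=> d [_ [y _ eq_db]]; apply: colQ'; split; first exact: locA_tofrac.
    by exists (cst y); [exact: locA_tofrac | rewrite -!tofracM -!polyCM eq_db].
  + by move=> d /Q'p /(contraction_extension d hp).
Qed.

Lemma ideal_min_size_num Q : is_ideal E Q -> (exists2 z, Q z & z != 0) ->
  exists g : {poly D},
    [/\ g != 0, Q g%:F & forall f, f != 0 -> Q f%:F -> (size g <= size f)%N].
Proof.
move=> hQ [z Qz z0]; have [QS _ _ _] := hQ.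
pose P n := exists g : {poly D}, [/\ g != 0, Q g%:F & size g = n].
have [|n [[g [g0 Qg sg]] gmin]] := classic_ex_minn (P := P).
  have [f [g [g0 ez]]] := QS _ Qz; rewrite ez in Qz z0.
  exists (size f), f; split=> //; last exact/(ideal_fracE f hQ g0).
  by apply: contra_neq z0 => ->; rewrite tofrac0 mul0r.
by exists g; split=> // f f0 Qf; rewrite sg; apply: gmin; exists f.
Qed.

Lemma min_size_num_divp Q g : is_ideal E Q -> Q g%:F -> g != 0 ->
  (forall f, f != 0 -> Q f%:F -> (size g <= size f)%N) ->
  forall h, Q h%:F -> lead_coef g ^+ scalp h g *: h = (h %/ g) * g.
Proof.
move=> [_ _ QD QM] Qg g0 gmin h Qh; have e := Pdiv.Idomain.divp_eq h g.
suff r0 : h %% g = 0 by rewrite e r0 addr0.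
apply: contrapT => /eqP r0.
have : Q (h %% g)%:F.
  rewrite -[h %% g](addKr (h %/ g * g)) -e -mul_polyC tofracD tofracN !tofracM.
  apply: QD; last by apply: QM => //; apply: locA_tofrac.
  by rewrite -mulNr; apply: QM => //; apply/locAN/locA_tofrac.
by move/(gmin _ r0); rewrite leqNgt Pdiv.Idomain.ltn_modpN0.
Qed.

Lemma size_scale_eq_mul (c : D) (f q g : {poly D}) : c != 0 -> f != 0 ->
  (1 < size g)%N -> c *: f = q * g -> q != 0 /\ (size q < size f)%N.
Proof.
move=> c0 f0 sg e; have g0 : g != 0 by rewrite -size_poly_gt0 ltnW.
have q0 : q != 0.
  apply/eqP => q0; move/eqP: e; rewrite q0 mul0r scale_poly_eq0 (negPf c0) /=.
  exact/negP.
split=> //; have := size_scale f c0; rewrite e size_mul //.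
have := size_poly_gt0 q; rewrite q0; lia.
Qed.

(* Pseudo-division by a numerator g of least size in Q' shows that Q' consists of
   multiples of g up to constants outside Q'; minimality of size puts g into Q. *)
Lemma contraction0_prime_le Q Q' : is_prime_ideal E Q -> is_prime_ideal E Q' ->
  (forall z, Q z -> Q' z) -> (exists2 z, Q z & z != 0) ->
  (forall c, contraction Q' c -> c = 0) -> forall z, Q' z -> Q z.
Proof.
move=> [iQ _ Qmul] [iQ' _ _] QQ' Qnz con0; have [_ _ _ QM] := iQ.
have [f [f0 Qf fmin]] := ideal_min_size_num iQ Qnz.
have [g [g0 Q'g gmin]] : exists g : {poly D},
    [/\ g != 0, Q' g%:F & forall f, f != 0 -> Q' f%:F -> (size g <= size f)%N].
  by apply: ideal_min_size_num => //; case: Qnz => z Qz z0; exists z => //; apply: QQ'.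
have lc0 k : lead_coef g ^+ k != 0 by rewrite expf_neq0 ?lead_coef_eq0.
have Q'lc k : ~ Q' (cst (lead_coef g ^+ k)) by move/con0/eqP; apply/negP.
have sg : (1 < size g)%N.
  rewrite ltnNge; apply/negP => sg1; move: Q'g g0; rewrite [g]size1_polyC //.
  by move/con0 ->; rewrite eqxx.
have Qg : Q g%:F.
  have e := min_size_num_divp iQ' Q'g g0 gmin (QQ' _ Qf).
  have : Q ((f %/ g)%:F * g%:F).
    by rewrite -tofracM -e -mul_polyC tofracM; apply: QM => //; apply: locA_tofrac.
  case/(Qmul _ _ (locA_tofrac _) (locA_tofrac _)) => // Qq.
  have [q0 lt_qf] := size_scale_eq_mul (lc0 _) f0 sg e.
  by have := fmin _ q0 Qq; rewrite leqNgt lt_qf.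
move=> z Q'z; have [Q'S _ _ _] := iQ'.
have [h [s [s0 ez]]] := Q'S _ Q'z; rewrite ez in Q'z *.
apply/(ideal_fracE h iQ s0); move/(ideal_fracE h iQ' s0): Q'z => Q'h.
have : Q (cst (lead_coef g ^+ scalp h g) * h%:F).
  rewrite -tofracM mul_polyC (min_size_num_divp iQ' Q'g g0 gmin Q'h) tofracM.
  by apply: QM Qg; apply: locA_tofrac.
by case/(Qmul _ _ (locA_tofrac _) (locA_tofrac _)) => // /QQ' /Q'lc.
Qed.

Lemma tofracC_neq0 (a : D) : a != 0 -> cst a != 0.
Proof. by rewrite tofrac_eq0 polyC_eq0. Qed.

(* The data of an associated prime Q, minimal over (A : B), with a nonzero c in
   its contraction: by minimal_prime_over_power, t (c ^+ n) lies in (A : B) for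
   some t outside Q; put a := c ^+ n and write the cofactor as h / s. *)
Section ColonWitness.
Variables (A B t : K) (a : D) (h s : {poly D}).
Hypotheses (A0 : A != 0) (a0 : a != 0) (Et : E t) (s0 : s.[0] = 1).
Hypothesis tB : t * cst a * B = A * (h%:F / s%:F).

Lemma colon_coef_divides f g : g.[0] = 1 ->
  colon E A B (f%:F / g%:F) -> forall k, divides a (f * h)`_k.
Proof.
move=> g0 [_ [y Ey eq_fB]].
have [u [v [v0 ey]]] : E (t * y) by apply: locAM.
have : f%:F / g%:F * (h%:F / s%:F) = cst a * (u%:F / v%:F).
  apply: (mulfI A0); transitivity (f%:F / g%:F * (A * (h%:F / s%:F))); first by ring.
  rewrite -tB -ey; transitivity (t * cst a * (f%:F / g%:F * B)); first by ring.
  by rewrite eq_fB; ring.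
have gs0 : (g * s).[0] = 1 by rewrite hornerM g0 s0 mulr1.
rewrite mulf_div [RHS]mulrA -!tofracM => /(frac_cross_eq gs0 v0) e.
apply: (divides_coef_mul_unit (g := v)); first by rewrite -horner_coef0.
by move=> k; rewrite e -mulrA coefCM; exists (u * (g * s))`_k.
Qed.

Lemma colon_of_coef_divides c :
  (forall k, divides a (c * h`_k)) -> colon E A B (cst c * t).
Proof.
move=> dch; have [w ew] : exists w, c%:P * h = a%:P * w.
  by apply: divides_polyC => k; rewrite coefCM.
split; first by apply: locAM => //; apply: locA_tofrac.
exists (w%:F / s%:F); first by exists w, s.
apply: (mulIf (tofracC_neq0 a0)).
transitivity (cst c * (t * cst a * B)); first by ring.
rewrite tB; transitivity (A * ((c%:P * h)%:F / s%:F)); first by rewrite tofracM; ring.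
by rewrite ew tofracM; ring.
Qed.

Lemma colon_sub_extension p i : prime_ideal p ->
  (forall c, divides a (c * h`_i) -> p c) -> forall x, colon E A B x -> extension p x.
Proof.
move=> hp colp x colx; have [f [g [g0 ex]]] := colx.1; rewrite ex in colx *.
have dfh := colon_coef_divides g0 colx.
have [pf|/existsNP [j pfj]] := pselect (poly_in p f); first by exists f, g.
by have [c pc /(_ i) /colp] := divides_coef_cancel hp pfj dfh.
Qed.

End ColonWitness.

Lemma assoc_prime_contraction0 Q : is_prime_ideal E Q ->
  (forall c, contraction Q c -> c = 0) ->
  is_assoc_prime (fun _ : D => True) (contraction Q).
Proof.
move=> hQ con0.
have Q0 : contraction Q 0 by rewrite /contraction tofrac0; case: hQ => [[]].
exists 0, 1; split=> //; first by case=> y _; rewrite mul0r => /eqP; rewrite oner_eq0.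
split=> [|x [_ [y _]]|Q' [[_ Q'0 _ _] _ _] _ _ c /con0 ->] //.
- exact: contraction_prime.
- by rewrite mulr1 mul0r => ->.
Qed.

Lemma assoc_prime_contraction Q c : is_assoc_prime E Q -> c != 0 -> contraction Q c ->
  is_assoc_prime (fun _ : D => True) (contraction Q) /\
  forall z, Q z <-> extension (contraction Q) z.
Proof.
move=> [A [B [_ _ nAB Qmin]]] c0 Qc; have [hQ colQ Qmin'] := Qmin.
have [[_ Q0 _ _] Q1 Qmul] := hQ; have hq := contraction_prime hQ.
have [t [n [Et Qt]]] := minimal_prime_over_power locA0 locA1 locAD locAM
  (colon_ideal locA0 locAD locAM A B) Qmin Qc.
rewrite -!rmorphXn => -[_ [_ [h [s [s0 ->]]] tB]].
set a := c ^+ n in tB; have a0 : a != 0 by rewrite expf_neq0.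
have A0 : A != 0.
  apply/eqP => A0; apply: nAB; exists 0; rewrite ?mulr0; first exact: locA0.
  move/eqP: tB; rewrite A0 mul0r !mulf_eq0 (negPf (tofracC_neq0 a0)) orbF.
  by case/orP => /eqP // t0; move: Qt; rewrite t0.
have [i coli] : exists i, forall c', divides a (c' * h`_i) -> contraction Q c'.
  apply: coef_colon_prime => // c'.
  move/(colon_of_coef_divides a0 Et s0 tB)/colQ/(Qmul _ _ (locA_tofrac _) Et).
  by case.
have colE := colon_sub_extension A0 Et s0 tB.
have QE z : Q z <-> extension (contraction Q) z.
  split; last by apply: extension_min => //; case: hQ.
  apply: Qmin' (extension_prime hq) (colE _ _ hq coli) _ z.
  by apply: extension_min => //; case: hQ.
split=> //; exists a, h`_i; split=> //.
  case=> y _ ehi; apply: Q1; move: (coli 1); rewrite /contraction polyC1 tofrac1.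
  by apply; exists y; rewrite mul1r.
split=> // [c' [_ [y _ e]]|Q'' hQ'' colQ'' Q''q c' qc']; first by apply: coli; exists y.
apply/(contraction_extension c' hQ''); apply: Qmin' qc'.
- exact: extension_prime.
- by apply: (colE _ i) => // d [y e]; apply: colQ''; split=> //; exists y.
- by apply: extension_min => //; case: hQ.
Qed.

Lemma contraction_assoc_prime Q : is_assoc_prime E Q ->
  is_assoc_prime (fun _ : D => True) (contraction Q).
Proof.
move=> assocQ; have [[c [c0 qc]]|con0] := pselect (exists c, c != 0 /\ contraction Q c).
  exact: (assoc_prime_contraction assocQ c0 qc).1.
apply: assoc_prime_contraction0; first by case: assocQ => [A [B [_ _ _ []]]].
by move=> c qc; apply: contrapT => /eqP c0; apply: con0; exists c.
Qed.

Lemma acc_assoc_primes_of_locA :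
  acc_assoc_primes E -> acc_assoc_primes (fun _ : D => True).
Proof.
move=> accE P assocP Pinc.
have hP n : prime_ideal (P n) by case: (assocP n) => [a [b [_ _ _ []]]].
have [N stE] := accE _ (fun n => extension_assoc_prime (assocP n))
  (fun n => extension_mono (Pinc n)).
exists N => n le_Nn c.
rewrite -(contraction_extension c (hP n)) -(contraction_extension c (hP N)).
exact: stE.
Qed.

Lemma chain_contraction0_stable (Q : nat -> K -> Prop) N :
  (forall n, is_prime_ideal E (Q n)) -> (forall n x, Q n x -> Q n.+1 x) ->
  (forall n, (N <= n)%N -> forall c, contraction (Q n) c -> c = 0) ->
  exists M, forall n, (M <= n)%N -> forall x, Q n x <-> Q M x.
Proof.
move=> hQ Qinc con0.
have [[m [z [le_Nm Qmz z0]]]|Qnz] :=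
  pselect (exists m z, [/\ (N <= m)%N, Q m z & z != 0]).
  exists m => n le_mn x; split; last exact: chain_le.
  apply: (contraction0_prime_le (hQ m) (hQ n)); [exact: chain_le | by exists z |].
  by apply: con0; apply: leq_trans le_mn.
have zero k : (N <= k)%N -> forall y, Q k y <-> y = 0.
  move=> le_Nk y; split=> [Qy|->]; last by case: (hQ k) => [[]].
  by apply: contrapT => /eqP y0; apply: Qnz; exists k, y.
by exists N => n le_Nn x; rewrite (zero n) // (zero N).
Qed.

Lemma acc_assoc_primes_locA :
  acc_assoc_primes (fun _ : D => True) -> acc_assoc_primes E.
Proof.
move=> accD Q assocQ Qinc.
have hQ n : is_prime_ideal E (Q n) by case: (assocQ n) => [A [B [_ _ _ []]]].
have [N stD] := accD _ (fun n => contraction_assoc_prime (assocQ n))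
  (fun n c => Qinc n (cst c)).
have [[c [c0 qc]]|con0] := pselect (exists c, c != 0 /\ contraction (Q N) c).
  exists N => n le_Nn z; have qnc : contraction (Q n) c by apply/(stD n le_Nn).
  rewrite (assoc_prime_contraction (assocQ n) c0 qnc).2.
  rewrite (assoc_prime_contraction (assocQ N) c0 qc).2.
  by split; apply: extension_mono => d /(stD n le_Nn).
apply: (chain_contraction0_stable hQ Qinc (N := N)) => n le_Nn c /(stD n le_Nn) qc.
by apply: contrapT => /eqP c0; apply: con0; exists c.
Qed.

End Localization.

Theorem mainTheorem6 (D : idomainType) :
  acc_assoc_primes (locA D) <-> acc_assoc_primes (fun _ : D => True).
Proof. by split; [apply: acc_assoc_primes_of_locA | apply: acc_assoc_primes_locA]. Qed.
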